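(* Let $1\leq\ell<d\leq k-1$ be integers with $k-\ell$ not dividing $k$. Then $\delta_d^{\mathrm{hf}}(k,\ell)=\delta_d^{\mathrm{frct}}(k,\ell)$.
   Context: A $k$-graph $G$ has vertex set $V(G)$ and edges that are $k$-subsets. For $0\le\ell<k$, a ($k$-uniform) $\ell$-cycle is a $k$-graph whose vertices can be cyclically ordered so that every edge consists of $k$ cyclically consecutive vertices and consecutive edges intersect in exactly $\ell$ vertices. For $1\le d<k$, $\delta_d(G)$ is the largest $m$ such that every $d$-set lies in at least $m$ edges. A homomorphism $F\to G$ is a vertex map sending edges to edges; a perfect fractional $\ell$-cycle tiling of $G$ is a weighting $\omega(\phi)\in[0,1]$ of homomorphisms $\phi$ from $k$-uniform $\ell$-cycles into $G$ (finitely many nonzero) with $\sum_\phi\omega(\phi)|\phi^{-1}(v)|=1$ for all $v$. The $\ell$-line graph of $G$ has vertex set $E(G)$ with $e\sim f$ iff $|e\cap f|\ge\ell$; a subgraph is $\ell$-connected if it has no isolated vertices and its edges induce a connected subgraph of the $\ell$-line graph; an $\ell$-component is an edge-maximal $\ell$-connected subgraph. A family $\mathcal{G}$ of $k$-graphs admits a Hamilton $\ell$-framework if for every $G\in\mathcal{G}$ there is a spanning subgraph $F(G)\subseteq G$ such that (F1) $F(G)$ is an $\ell$-component of $G$; (F2) $F(G)$ has a perfect fractional $\ell$-cycle tiling; (F3) $F(H-x)\cup F(H-y)$ is $\ell$-connected for every $k$-graph $H$ and $x,y\in V(H)$ with $H-x,H-y\in\mathcal{G}$. The threshold $\delta_d^{\mathrm{hf}}(k,\ell)$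 is the infimum of $\delta\in[0,1]$ such that for every $\varepsilon>0$ there is $n_0$ such that the family of all $k$-graphs $G$ on $n\ge n_0$ vertices, $n$ divisible by $k-\ell$, with $\delta_d(G)\ge(\delta+\varepsilon)\binom{n-d}{k-d}$ admits a Hamilton $\ell$-framework. The threshold $\delta_d^{\mathrm{frct}}(k,\ell)$ is the infimum of $\delta\in[0,1]$ such that for every $\varepsilon>0$ there is $n_0$ such that every $k$-graph on $n\ge n_0$ vertices with $\delta_d(G)\ge(\delta+\varepsilon)\binom{n-d}{k-d}$ has a perfect fractional $\ell$-cycle tiling. *)

From HB Require Import structures.
From mathcomp Require Import all_boot all_order all_algebra.
From mathcomp Require Import finmap.
From mathcomp Require Import reals.
From Stdlib Require Import Relations.

Set Implicit Arguments.
Unset Strict Implicit.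
Unset Printing Implicit Defensive.

Import Order.TTheory GRing.Theory Num.Theory.
Local Open Scope fset_scope.
Local Open Scope ring_scope.

Record hgraph := HGraph { verts : {fset nat}; hedges : {fset {fset nat}} }.

Definition is_kgraph (k : nat) (G : hgraph) : Prop :=
  forall e, e \in hedges G -> e `<=` verts G /\ #|` e| = k.

Definition subgraph (H G : hgraph) : Prop :=
  verts H `<=` verts G /\ hedges H `<=` hedges G.

Definition spanning_subgraph (H G : hgraph) : Prop :=
  subgraph H G /\ verts H = verts G.

Definition del_vertex (G : hgraph) (x : nat) : hgraph :=
  HGraph (verts G `\ x) [fset e in hedges G | x \notin e].

Definition hunion (G H : hgraph) : hgraph :=
  HGraph (verts G `|` verts H) (hedges G `|` hedges H).

Definition hdeg (G : hgraph) (S : {fset nat}) : nat :=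
  #|` [fset e in hedges G | S `<=` e]|.

Definition mindeg_ge {R : realType} (G : hgraph) (d : nat) (x : R) : Prop :=
  forall S : {fset nat}, S `<=` verts G -> #|` S| = d -> x <= (hdeg G S)%:R.

Definition lline_adj (l : nat) (E : {fset {fset nat}}) (e f : {fset nat}) : Prop :=
  e \in E /\ f \in E /\ (l <= #|` e `&` f|)%N.

Definition lconnected (l : nat) (H : hgraph) : Prop :=
  (forall v, v \in verts H -> exists2 e, e \in hedges H & v \in e) /\
  (forall e f, e \in hedges H -> f \in hedges H ->
     clos_refl_trans _ (lline_adj l (hedges H)) e f).

Definition lcomponent (l : nat) (C G : hgraph) : Prop :=
  subgraph C G /\ lconnected l C /\
  (forall C', subgraph C' G -> lconnected l C' ->
     hedges C `<=` hedges C' -> hedges C' = hedges C).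

(** The k-uniform l-cycle with [m] edges, on vertex set {0, ..., m(k-l)-1}
    in cyclic order; its i-th edge is the window of k cyclically consecutive
    vertices starting at i(k-l). *)
Definition cyc_window (k l m i : nat) : {fset nat} :=
  [fset ((i * (k - l) + j) %% (m * (k - l)))%N | j in iota 0 k].

Definition lcycle (k l m : nat) : hgraph :=
  HGraph [fset j | j in iota 0 (m * (k - l))%N]
         [fset cyc_window k l m i | i in iota 0 m]%N.

(** The numbers of edges [m] for which [lcycle k l m] is an l-cycle, i.e.
    consecutive edges intersect in exactly l vertices (and edges have k
    vertices): this holds iff m >= 1 and m(k-l) >= 2k-l. *)
Definition lcycle_len_ok (k l m : nat) : Prop :=
  (0 < m)%N /\ (2 * k - l <= m * (k - l))%N.

(** A homomorphism from an l-cycle into [G], encoded by the sequence [s] of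
    images of the cycle vertices 0, ..., m(k-l)-1. *)
Definition cycle_hom (k l : nat) (G : hgraph) (s : seq nat) : Prop :=
  exists m, lcycle_len_ok k l m /\ size s = (m * (k - l))%N /\
    forall e, e \in hedges (lcycle k l m) ->
      [fset nth 0%N s i | i in e] \in hedges G.

Definition perfect_frac_tiling {R : realType} (k l : nat) (G : hgraph) : Prop :=
  exists T : seq (seq nat * R),
    uniq (map fst T) /\
    (forall p, p \in T -> cycle_hom k l G p.1 /\ 0 <= p.2 <= 1) /\
    (forall v, v \in verts G ->
       \sum_(p <- T) p.2 * (count_mem v p.1)%:R = 1).

Definition admits_ham_framework {R : realType} (k l : nat) (fam : hgraph -> Prop) : Prop :=
  exists F : hgraph -> hgraph,
    (forall G, fam G ->
       spanning_subgraph (F G) G /\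
       lcomponent l (F G) G /\
       @perfect_frac_tiling R k l (F G)) /\
    (forall H x y, is_kgraph k H -> x \in verts H -> y \in verts H ->
       fam (del_vertex H x) -> fam (del_vertex H y) ->
       lconnected l (hunion (F (del_vertex H x)) (F (del_vertex H y)))).

Definition hf_family {R : realType} (k l d n0 : nat) (delta eps : R) (G : hgraph) : Prop :=
  is_kgraph k G /\ (n0 <= #|` verts G|)%N /\ ((k - l) %| #|` verts G|)%N /\
  mindeg_ge G d ((delta + eps) * ('C(#|` verts G| - d, k - d))%:R).

Definition hf_admissible {R : realType} (k l d : nat) (delta : R) : Prop :=
  0 <= delta <= 1 /\
  forall eps : R, 0 < eps -> exists n0 : nat,
    @admits_ham_framework R k l (hf_family k l d n0 delta eps).

Definition frct_admissible {R : realType} (k l d : nat) (delta : R) : Prop :=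
  0 <= delta <= 1 /\
  forall eps : R, 0 < eps -> exists n0 : nat,
    forall G, is_kgraph k G -> (n0 <= #|` verts G|)%N ->
      mindeg_ge G d ((delta + eps) * ('C(#|` verts G| - d, k - d))%:R) ->
      @perfect_frac_tiling R k l G.

Definition hf_threshold (R : realType) (k l d : nat) : R :=
  inf (fun delta : R => @hf_admissible R k l d delta).

Definition frct_threshold (R : realType) (k l d : nat) : R :=
  inf (fun delta : R => @frct_admissible R k l d delta).

From mathcomp Require Import all_boot all_order all_algebra.
From mathcomp Require Import finmap boolp reals.
From mathcomp Require Import zify lra.
From Stdlib Require Import Relations.

(* The two thresholds are infima of the same set: delta is hf-admissible iff it
   is frct-admissible.
   If large graphs above the degree bound have perfect fractional tilings, then
   F(G) = G is a Hamilton framework: positive d-degree puts every d-set inside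
   an edge, and since l < d any two d-sets are joined by a chain of d-sets whose
   consecutive members share d - 1 >= l vertices; so G is l-connected, and so
   is the union of G - x and G - y, which share a d-set.
   Conversely, let r = n mod (k - l). Deleting any r vertices lowers the
   d-degree by at most r C(n-d-1, k-d-1) = o(C(n-d, k-d)), so every such G - X
   lies in the framework family for eps/2 and has a perfect fractional tiling;
   averaging these tilings over X, one vertex at a time with weight 1/(n-1),
   tiles G. *)

Set Implicit Arguments.
Unset Strict Implicit.
Unset Printing Implicit Defensive.

Import Order.TTheory GRing.Theory Num.Theory.
Local Open Scope fset_scope.

Section FsetCard.
Variable K : choiceType.
Implicit Types (A S V : {fset K}).

Lemma fsubset_extend_card A V d :
  A `<=` V -> (#|`A| <= d <= #|`V|)%N ->
  exists S, [/\ A `<=` S, S `<=` V & #|`S| = d].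
Proof.
move=> AV /andP[Ad dV]; move: {2}(d - #|`A|)%N (erefl (d - #|`A|)%N) => m.
elim: m A AV Ad => [|m IH] A AV Ad dA.
  by exists A; split=> //; lia.
have [x xV xA] : exists2 x, x \in V & x \notin A.
  by apply/fsubsetPn/negP => /fsubset_leq_card; lia.
have hxA : #|`x |` A| = #|`A|.+1 by rewrite cardfsU1 xA.
have [|||S [xAS SV hS]] := IH (x |` A); rewrite ?hxA; try lia.
  by rewrite fsubUset fsub1set xV.
by exists S; split=> //; apply: fsubset_trans xAS; apply: fsubsetU1.
Qed.

Lemma fsubset_card_exists V d : (d <= #|`V|)%N -> exists S, S `<=` V /\ #|`S| = d.
Proof.
move=> dV; have [|S [_ SV hS]] := @fsubset_extend_card fset0 V d (fsub0set V).
  by rewrite cardfs0.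
by exists S.
Qed.

Lemma card_bigfcup_le (I : Type) (s : seq I) (F : I -> {fset K}) :
  (#|` \bigcup_(i <- s) F i| <= \sum_(i <- s) #|` F i|)%N.
Proof.
elim/big_rec2: _ => [|i n U _ leUn]; first by rewrite cardfs0.
by rewrite (leq_trans (leq_card_fsetU _ _).1) ?leq_add2l.
Qed.

Lemma card_fsubsets_le (W : {fset K}) (F : {fset {fset K}}) j :
  (forall A, A \in F -> A `<=` W /\ #|`A| = j) -> (#|`F| <= 'C(#|`W|, j))%N.
Proof.
move=> hF; have inj : {in F &, injective (fsub W)}.
  by move=> A B /hF[AW _] /hF[BW _]; apply: fsub_inj.
move/card_in_imfsetP/eqP: inj => <-; rewrite [#|` W|]cardfE -card_draws.
have /card_uniqP <- := fset_uniq (fsub W @` F).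
apply/subset_leq_card/subsetP => _ /imfsetP[A AF ->]; rewrite inE.
by have [AW <-] := hF A AF; rewrite card_fsub.
Qed.

End FsetCard.

Definition dcover (d : nat) (W : {fset nat}) (E : {fset {fset nat}}) : Prop :=
  forall S, S `<=` W -> #|`S| = d -> exists2 e, e \in E & S `<=` e.

Lemma dcoverS d W E E' : E `<=` E' -> dcover d W E -> dcover d W E'.
Proof.
move=> EE' cov S SW hS; have [e eE Se] := cov S SW hS.
by exists e => //; apply: (fsubsetP EE').
Qed.

Lemma dcover_vertex d W E v : (0 < d <= #|`W|)%N -> dcover d W E -> v \in W ->
  exists2 e, e \in E & v \in e.
Proof.
move=> /andP[d0 dW] cov vW.
have vW' : [fset v] `<=` W by rewrite fsub1set.
have := @fsubset_extend_card _ _ _ d vW'; rewrite cardfs1 d0 dW => /(_ isT)[S [vS SW hS]].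
by have [e eE Se] := cov S SW hS; exists e; last by apply: (fsubsetP Se); rewrite -fsub1set.
Qed.

Lemma lline_adjI l E e f (A : {fset nat}) : e \in E -> f \in E ->
  A `<=` e -> A `<=` f -> (l <= #|`A|)%N -> lline_adj l E e f.
Proof.
move=> eE fE Ae Af lA; split=> //; split=> //.
by apply: leq_trans lA (fsubset_leq_card _); rewrite fsubsetI Ae Af.
Qed.

(* Exchanging one vertex at a time moves S to T through d-sets that pairwise
   share d - 1 >= l vertices; covering edges of consecutive d-sets are adjacent. *)
Lemma lline_connect_dsets l d W E S T e f : (l < d)%N -> dcover d W E ->
  S `<=` W -> T `<=` W -> #|`S| = d -> #|`T| = d ->
  e \in E -> f \in E -> S `<=` e -> T `<=` f ->
  clos_refl_trans _ (lline_adj l E) e f.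
Proof.
move=> ld cov + TW + hT + fE + Tf; move: {2}#|`S `\` T| (erefl #|`S `\` T|) => m.
elim: m S e => [|m IH] S e dST SW hS eE Se.
  have ST : S `<=` T by rewrite -fsetD_eq0 -cardfs_eq0 dST.
  apply: rt_step; apply: (lline_adjI (A := S)) => //; last by rewrite hS ltnW.
  by apply: fsubset_trans Tf; apply: fsubset_trans ST _.
have [a aS aT] : exists2 a, a \in S & a \notin T.
  by apply/fsubsetPn; rewrite -fsetD_eq0 -cardfs_eq0 dST.
have [b bT bS] : exists2 b, b \in T & b \notin S.
  apply/fsubsetPn/negP => TS; have /eqP TeS : T == S by rewrite eqEfcard TS hS hT leqnn.
  by rewrite TeS aS in aT.
have hSa : #|`S `\ a|.+1 = d by rewrite -hS (cardfsD1 a S) aS.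
have bSa : b \notin S `\ a by rewrite in_fsetD1 (negbTE bS) andbF.
set S' := b |` (S `\ a).
have hS' : #|`S'| = d by rewrite cardfsU1 bSa.
have S'W : S' `<=` W.
  by rewrite fsubUset fsub1set (fsubsetP TW) //; apply: fsubset_trans SW; apply: fsubsetDl.
have [g gE S'g] := cov S' S'W hS'.
apply: (rt_trans _ _ _ g).
  apply: rt_step; apply: (lline_adjI (A := S `\ a)) => //; last by rewrite -ltnS hSa.
  - by apply: fsubset_trans Se; apply: fsubsetDl.
  - by apply: fsubset_trans S'g; apply: fsubsetU1.
apply: (IH S') => //; move: (cardfsD1 a (S `\` T)).
rewrite in_fsetD aS aT dST add1n => -[->].
suff -> : S' `\` T = (S `\` T) `\ a by [].
apply/fsetP=> z; rewrite !inE; case: (z =P b) => [->|_]; first by rewrite bT andbF.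
by case: (z \in T); case: (z == a).
Qed.

Lemma kgraph_edge_dsubset k d G e : is_kgraph k G -> (d <= k)%N -> e \in hedges G ->
  exists S, [/\ S `<=` e, S `<=` verts G & #|`S| = d].
Proof.
move=> kG dk eG; have [eV he] := kG e eG.
have [|S [Se hS]] := @fsubset_card_exists _ e d; first by rewrite he.
by exists S; split=> //; apply: fsubset_trans eV.
Qed.

Lemma lconnected_hunion k l d G1 G2 : (l < d)%N -> (d <= k)%N ->
  is_kgraph k G1 -> is_kgraph k G2 ->
  dcover d (verts G1) (hedges G1) -> dcover d (verts G2) (hedges G2) ->
  (exists U, U `<=` verts G1 `&` verts G2 /\ #|`U| = d) ->
  lconnected l (hunion G1 G2).
Proof.
move=> ld dk kG1 kG2 cov1 cov2 [U [UV hU]].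
set E := hedges (hunion G1 G2).
have cov1E : dcover d (verts G1) E by apply: dcoverS cov1; apply: fsubsetUl.
have cov2E : dcover d (verts G2) E by apply: dcoverS cov2; apply: fsubsetUr.
have U1 : U `<=` verts G1 by apply: fsubset_trans UV (fsubsetIl _ _).
have U2 : U `<=` verts G2 by apply: fsubset_trans UV (fsubsetIr _ _).
have d0 : (0 < d)%N by apply: leq_ltn_trans ld.
have [g gE Ug] := cov1E U U1 hU.
have dsub : forall e, e \in E -> exists W S,
    [/\ dcover d W E, U `<=` W, S `<=` W, S `<=` e & #|`S| = d].
  move=> e; rewrite in_fsetU => /orP[eG|eG].
  - by have [S [Se SV hS]] := kgraph_edge_dsubset kG1 dk eG; exists (verts G1), S.
  - by have [S [Se SV hS]] := kgraph_edge_dsubset kG2 dk eG; exists (verts G2), S.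
split.
  move=> v; rewrite in_fsetU => /orP[vV|vV].
  - by apply: dcover_vertex cov1E vV; rewrite d0 -hU fsubset_leq_card.
  - by apply: dcover_vertex cov2E vV; rewrite d0 -hU fsubset_leq_card.
move=> e f eE fE.
have [W [S [covW UW SW Se hS]]] := dsub e eE.
have [W' [T [covW' UW' TW' Tf hT]]] := dsub f fE.
apply: (rt_trans _ _ _ g).
  exact: (lline_connect_dsets (S := S) (T := U) ld covW).
exact: (lline_connect_dsets (S := U) (T := T) ld covW').
Qed.

Lemma hunion_id G : hunion G G = G.
Proof. by case: G => V E; rewrite /hunion /= !fsetUid. Qed.

Lemma lconnected_of_dcover k l d G : (l < d)%N -> (d <= k)%N -> is_kgraph k G ->
  dcover d (verts G) (hedges G) -> (d <= #|`verts G|)%N -> lconnected l G.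
Proof.
move=> ld dk kG cov dV; rewrite -(hunion_id G).
apply: (lconnected_hunion ld dk) => //; rewrite fsetIid.
exact: fsubset_card_exists.
Qed.

Lemma lcomponent_self l G : lconnected l G -> lcomponent l G G.
Proof.
move=> lG; split; first by split; apply: fsubset_refl.
split=> // C' [_ C'G] _ GC'; apply/eqP; by rewrite eqEfsubset C'G GC'.
Qed.

Definition del_set (G : hgraph) (X : {fset nat}) : hgraph :=
  HGraph (verts G `\` X) [fset e in hedges G | [disjoint e & X]%fset].

Lemma del_set0 G : del_set G fset0 = G.
Proof.
case: G => V E; rewrite /del_set /= fsetD0; congr HGraph.
by apply/fsetP=> e; rewrite in_fset inE /= fdisjointX0 andbT.
Qed.

Lemma del_set_del_vertex G x X : del_set (del_vertex G x) X = del_set G (x |` X).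
Proof.
rewrite /del_set /=; congr HGraph; first by rewrite fsetDDl fsetUC.
by apply/fsetP=> e; rewrite !in_fset !inE /= fdisjointXU fdisjointX1 andbA.
Qed.

Lemma is_kgraph_del_vertex k G x : is_kgraph k G -> is_kgraph k (del_vertex G x).
Proof.
move=> kG e; rewrite inE => /andP[eG xe]; have [eV he] := kG e eG.
by rewrite fsubsetD1 eV xe.
Qed.

Lemma is_kgraph_del_set k G X : is_kgraph k G -> is_kgraph k (del_set G X).
Proof.
move=> kG e; rewrite inE => /andP[eG /fdisjointP eX]; have [eV he] := kG e eG.
by split=> //; apply/fsubsetP => z ze; rewrite in_fsetD eX // (fsubsetP eV).
Qed.

Lemma hdeg_le_bin k d G T : is_kgraph k G -> T `<=` verts G -> #|`T| = d ->
  (hdeg G T <= 'C(#|`verts G| - d, k - d))%N.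
Proof.
move=> kG TV hT; set F := [fset e in hedges G | T `<=` e].
have inj : {in F &, injective (fun e => e `\` T)}.
  move=> e f; rewrite !inE => /andP[_ Te] /andP[_ Tf] eTf.
  apply/fsetP => z; have [zT|zT] := boolP (z \in T).
    by rewrite (fsubsetP Te) ?(fsubsetP Tf).
  by move/fsetP/(_ z): eTf; rewrite !in_fsetD zT.
rewrite /hdeg -/F; move/card_in_imfsetP/eqP: inj => <-.
rewrite -hT -cardfsDS //; apply: card_fsubsets_le => _ /imfsetP[e /= eF ->].
move: eF; rewrite inE => /andP[eG Te]; have [eV he] := kG e eG.
by rewrite fsetSD // cardfsDS // he hT.
Qed.

(* An edge through [S] that meets [X] contains [x |` S] for some [x] in [X]. *)
Lemma hdeg_le_del_set k d G X S : is_kgraph k G -> X `<=` verts G ->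
  S `<=` verts G `\` X -> #|`S| = d ->
  (hdeg G S <= hdeg (del_set G X) S + #|`X| * 'C(#|`verts G| - d.+1, k - d.+1))%N.
Proof.
move=> kG XV SV hS.
set through := fun x => [fset e in hedges G | x |` S `<=` e].
have sub : [fset e in hedges G | S `<=` e] `<=`
    [fset e in hedges (del_set G X) | S `<=` e] `|` \bigcup_(x <- X) through x.
  apply/fsubsetP => e; rewrite !inE => /andP[eG Se]; rewrite eG Se andbT /=.
  case: (boolP [disjoint e & X]%fset) => //=.
  rewrite -fsetI_eq0 => /fset0Pn[x]; rewrite in_fsetI => /andP[xe xX].
  apply/bigfcupP; exists x; first by rewrite xX.
  by rewrite /through !inE eG fsubUset fsub1set xe Se.
rewrite /hdeg; apply: (leq_trans (fsubset_leq_card sub)).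
apply: (leq_trans (leq_card_fsetU _ _).1); rewrite leq_add2l.
apply: (leq_trans (card_bigfcup_le _ _)).
rewrite -sum1_size big_distrl /= mul1n big_seq [leqRHS]big_seq; apply: leq_sum => x xX.
have xS : x \notin S by apply/negP => /(fsubsetP SV); rewrite in_fsetD xX.
apply: (hdeg_le_bin kG); last by rewrite cardfsU1 xS hS.
rewrite fsubUset fsub1set (fsubsetP XV) //.
by apply: fsubset_trans SV (fsubsetDl _ _).
Qed.

Lemma mul_bin_sub n d k : (d < k)%N ->
  ((n - d) * 'C(n - d.+1, k - d.+1) = (k - d) * 'C(n - d, k - d))%N.
Proof. by move=> dk; rewrite subnS -(subnSK dk) mul_bin_diag. Qed.

Local Open Scope ring_scope.

Lemma mindeg_geW (R : realType) G d (x y : R) :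
  mindeg_ge G d y -> x <= y -> mindeg_ge G d x.
Proof. by move=> mG xy S SV hS; apply: le_trans xy (mG S SV hS). Qed.

Lemma dcover_of_mindeg_ge (R : realType) G d (x : R) :
  0 < x -> mindeg_ge G d x -> dcover d (verts G) (hedges G).
Proof.
move=> x0 mG S SV hS; have := lt_le_trans x0 (mG S SV hS).
by rewrite ltr0n cardfs_gt0 => /fset0Pn[e]; rewrite inE => /andP[eG Se]; exists e.
Qed.

Lemma mindeg_bound_gt0 (R : realType) (delta eps : R) n d k :
  0 <= delta -> 0 < eps -> (k <= n)%N -> 0 < (delta + eps) * ('C(n - d, k - d))%:R.
Proof.
move=> d0 e0 kn; rewrite mulr_gt0 ?ltr0n ?bin_gt0 ?leq_sub2r //.
by rewrite (lt_le_trans e0) // lerDr.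
Qed.

Lemma hf_family_dcover (R : realType) k l d n0 (delta eps : R) G :
  0 <= delta -> 0 < eps -> (k <= n0)%N -> hf_family k l d n0 delta eps G ->
  dcover d (verts G) (hedges G).
Proof.
move=> d0 e0 kn [_ [nG [_ mG]]]; apply: dcover_of_mindeg_ge mG.
by apply: mindeg_bound_gt0 => //; apply: leq_trans nG.
Qed.

Lemma mindeg_ge_del_set (R : realType) k d G X (x : R) : is_kgraph k G -> X `<=` verts G ->
  mindeg_ge G d x ->
  mindeg_ge (del_set G X) d (x - (#|`X| * 'C(#|`verts G| - d.+1, k - d.+1))%:R).
Proof.
move=> kG XV mG S SV hS; rewrite lerBlDr -natrD.
apply: le_trans (mG S (fsubset_trans SV (fsubsetDl _ _)) hS) _.
by rewrite ler_nat; apply: hdeg_le_del_set.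
Qed.

(* The loss [r C(n-d-1, k-d-1)] is at most [e C(n-d, k-d)] since
   [(n - d) C(n-d-1, k-d-1) = (k - d) C(n-d, k-d)]. *)

Lemma del_set_degree_bound (R : realFieldType) (delta e : R) n n' d k r :
  0 <= delta -> 0 <= e -> (d < k)%N -> (d < n)%N -> (n' <= n)%N ->
  (r * (k - d))%:R <= e * (n - d)%:R ->
  (delta + e) * ('C(n' - d, k - d))%:R <=
    (delta + e + e) * ('C(n - d, k - d))%:R - (r * 'C(n - d.+1, k - d.+1))%:R.
Proof.
move=> d0 e0 dk dn n'n hr.
set C := 'C(n - d, k - d); set C' := 'C(n - d.+1, k - d.+1).
have N0 : 0 < (n - d)%:R :> R by rewrite ltr0n subn_gt0.
have loss : (r * C')%:R <= e * C%:R.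
  rewrite -(ler_pM2l N0) -natrM mulnCA mul_bin_sub // mulnA natrM mulrCA.
  by rewrite mulrA; apply: ler_wpM2r.
have shrink : (delta + e) * ('C(n' - d, k - d))%:R <= (delta + e) * C%:R.
  by rewrite ler_wpM2l ?addr_ge0 // ler_nat leq_bin2l // leq_sub2r.
lra.
Qed.

Lemma big_undup_partition (V : nmodType) (I J : eqType) (f : I -> J) (r : seq I)
    (F : I -> V) :
  \sum_(i <- r) F i = \sum_(j <- undup (map f r)) \sum_(i <- r | f i == j) F i.
Proof.
rewrite [RHS](exchange_big_dep xpredT) //=; apply: eq_big_seq => i ir.
rewrite big_const_seq (eq_count (a2 := pred1 (f i))) => [|j]; last by rewrite /= eq_sym.
by rewrite count_uniq_mem ?undup_uniq // mem_undup map_f //= addr0.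
Qed.

Section FracTilings.

Variables (R : realType) (k l : nat).
Hypothesis lk : (l < k)%N.

Definition vertex_load (T : seq (seq nat * R)) (v : nat) : R :=
  \sum_(p <- T) p.2 * (count_mem v p.1)%:R.

Definition hom_weighting (G : hgraph) (T : seq (seq nat * R)) : Prop :=
  forall p, p \in T -> cycle_hom k l G p.1 /\ 0 <= p.2.

Definition scale_weights (a : R) (T : seq (seq nat * R)) : seq (seq nat * R) :=
  [seq (p.1, a * p.2) | p <- T].

Lemma cycle_hom_sub G1 G2 s :
  hedges G1 `<=` hedges G2 -> cycle_hom k l G1 s -> cycle_hom k l G2 s.
Proof.
move=> sub [m [hm [sz hE]]]; exists m; split=> //; split=> // e eE.
exact: (fsubsetP sub) (hE e eE).
Qed.

Lemma cycle_hom_nil G : ~ cycle_hom k l G [::].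
Proof.
move=> [m [[m0 _] [/esym/eqP]]]; rewrite muln_eq0 subn_eq0 leqNgt lk orbF.
by move=> /eqP m_eq0; rewrite m_eq0 in m0.
Qed.

(* The [j]-th vertex of the cycle lies in the window number [j %/ (k - l)]. *)
Lemma cycle_hom_mem_edge G s v : cycle_hom k l G s -> v \in s ->
  exists2 e, e \in hedges G & v \in e.
Proof.
move=> [m [[m0 _] [sz hE]]] vs; have q0 : (0 < k - l)%N by rewrite subn_gt0.
set j := index v s; have js : (j < m * (k - l))%N by rewrite -sz index_mem.
set i := (j %/ (k - l))%N; have im : (i < m)%N by rewrite ltn_divLR.
have wE : cyc_window k l m i \in hedges (lcycle k l m).
  by apply/imfsetP; exists i; rewrite //= mem_iota.
exists [fset nth 0%N s x | x in cyc_window k l m i]; first exact: hE.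
apply/imfsetP; exists j; last by rewrite nth_index.
apply/imfsetP; exists (j %% (k - l))%N => /=.
  by rewrite mem_iota add0n (leq_trans (ltn_pmod _ q0)) // leq_subr.
by rewrite /i -divn_eq modn_small.
Qed.

Lemma hom_weighting_sub G1 G2 T :
  hedges G1 `<=` hedges G2 -> hom_weighting G1 T -> hom_weighting G2 T.
Proof. by move=> sub hT p /hT[hom w0]; split=> //; apply: cycle_hom_sub hom. Qed.

Lemma hom_weighting_scale G a T :
  0 <= a -> hom_weighting G T -> hom_weighting G (scale_weights a T).
Proof. by move=> a0 hT _ /mapP[p /hT[hom w0] ->]; split=> //=; apply: mulr_ge0. Qed.

Lemma hom_weighting_flatten G Ts :
  (forall T, T \in Ts -> hom_weighting G T) -> hom_weighting G (flatten Ts).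
Proof. by move=> hTs p /flattenP[T /hTs hT /hT]. Qed.

Lemma vertex_load_scale a T v : vertex_load (scale_weights a T) v = a * vertex_load T v.
Proof. by rewrite /vertex_load big_map mulr_sumr; apply: eq_bigr => p _; rewrite mulrA. Qed.

Lemma vertex_load_flatten Ts v :
  vertex_load (flatten Ts) v = \sum_(T <- Ts) vertex_load T v.
Proof. exact: big_flatten. Qed.

Lemma vertex_load_eq0 G T v : hom_weighting G T ->
  (forall e, e \in hedges G -> v \notin e) -> vertex_load T v = 0.
Proof.
move=> hT vG; rewrite /vertex_load big_seq big1 // => p /hT[hom _].
suff -> : count_mem v p.1 = 0%N by rewrite mulr0.
apply/count_memPn/negP => /(cycle_hom_mem_edge hom)[e eG ve].
by move: (vG e eG); rewrite ve.
Qed.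

Lemma merged_weight_le_vertex_load (T : seq (seq nat * R)) (s : seq nat) v :
  (forall p, p \in T -> 0 <= p.2) -> v \in s ->
  \sum_(p <- T | p.1 == s) p.2 <= vertex_load T v.
Proof.
move=> w0 vs; rewrite /vertex_load [leRHS](bigID (fun p => p.1 == s)) /= -[leLHS]addr0.
apply: lerD.
  rewrite big_seq_cond [leRHS]big_seq_cond; apply: ler_sum => p /andP[pT /eqP ->].
  by rewrite ler_peMr ?(w0 p pT) // ler1n -has_count has_pred1.
by rewrite big_seq_cond sumr_ge0 // => p /andP[/w0 ? _]; rewrite mulr_ge0.
Qed.

(* Merging repeated homomorphisms keeps every vertex load; each merged weight is
   at most the load (= 1) of any vertex in the image of its homomorphism. *)
Lemma perfect_frac_tilingP G : is_kgraph k G ->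
  @perfect_frac_tiling R k l G <->
  exists2 T, hom_weighting G T & forall v, v \in verts G -> vertex_load T v = 1.
Proof.
move=> kG; split=> [[T [_ [hT load]]]|[T hT load]].
  by exists T => // p /hT[hom /andP[w0 _]].
have w0 p : p \in T -> 0 <= p.2 by case/hT.
set merged := fun s => \sum_(p <- T | p.1 == s) p.2.
exists [seq (s, merged s) | s <- undup (map fst T)]; split.
  by rewrite -map_comp map_id_in ?undup_uniq.
split.
  move=> q /mapP[s]; rewrite mem_undup => /mapP[p pT ->] -> /=.
  have [hom _] := hT p pT; split=> //.
  rewrite /merged /=; apply/andP; split.
    by rewrite big_seq_cond sumr_ge0 // => r /andP[/w0].
  case: p.1 hom => [/cycle_hom_nil //|v t] hom.
  have [e eG ve] := cycle_hom_mem_edge hom (mem_head v t).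
  have [eV _] := kG e eG.
  by rewrite -[leRHS](load v (fsubsetP eV v ve)) merged_weight_le_vertex_load ?mem_head.
move=> v vV; rewrite -[RHS](load v vV) /vertex_load [RHS](big_undup_partition fst) big_map.
by apply: eq_bigr => s _; rewrite mulr_suml; apply: eq_big => // p /eqP ->.
Qed.

(* Average the tilings of all [G - x] with weight [1 / (n - 1)]: a vertex [v]
   is covered once by each of the [n - 1] tilings with [x != v], and not at
   all by the tiling of [G - v]. *)
Lemma perfect_frac_tiling_avg G : is_kgraph k G -> (1 < #|`verts G|)%N ->
  (forall x, x \in verts G -> @perfect_frac_tiling R k l (del_vertex G x)) ->
  @perfect_frac_tiling R k l G.
Proof.
move=> kG n2 tiles.
have /choice[T hT] : forall x, exists Tx, x \in verts G ->
    hom_weighting (del_vertex G x) Tx /\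
    forall v, v \in verts (del_vertex G x) -> vertex_load Tx v = 1.
  move=> x; have [xV|_] := boolP (x \in verts G); last by exists [::].
  have kGx := is_kgraph_del_vertex (x := x) kG.
  by have /(perfect_frac_tilingP kGx)[Tx hTx load] := tiles x xV; exists Tx.

set c : R := (#|`verts G| - 1)%N%:R.
have c0 : c != 0 by rewrite pnatr_eq0 subn_eq0 -ltnNge.
apply/(perfect_frac_tilingP kG).
exists (flatten [seq scale_weights c^-1 (T x) | x <- verts G]).
  apply: hom_weighting_flatten => _ /mapP[x xV ->].
  apply: hom_weighting_scale; first by rewrite invr_ge0 ler0n.
  apply: hom_weighting_sub (proj1 (hT x xV)).
  by apply/fsubsetP => e; rewrite inE => /andP[].
move=> v vV; rewrite vertex_load_flatten big_map (bigD1_seq v) ?fset_uniq //=.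
rewrite vertex_load_scale (vertex_load_eq0 (proj1 (hT v vV))); last first.
  by move=> e; rewrite inE => /andP[].
rewrite mulr0 add0r big_seq_cond (eq_bigr (fun _ => c^-1)); last first.
  move=> x /andP[xV xv]; rewrite vertex_load_scale (proj2 (hT x xV)) ?mulr1 //.
  by rewrite /= in_fsetD1 eq_sym xv vV.
have cnt : count (predC1 v) (verts G) = (#|`verts G| - 1)%N.
  have := count_predC (pred1 v) (verts G).
  by rewrite count_uniq_mem ?fset_uniq // vV add1n => <-; rewrite subSS subn0.
rewrite -big_seq_cond big_const_seq iter_addr_0 (eq_count (a2 := predC1 v)) //.
by rewrite cnt -mulr_natr mulVf.
Qed.

Lemma perfect_frac_tiling_del_sets r G : is_kgraph k G -> (r < #|`verts G|)%N ->
  (forall X, X `<=` verts G -> #|`X| = r -> @perfect_frac_tiling R k l (del_set G X)) ->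
  @perfect_frac_tiling R k l G.
Proof.
elim: r G => [|r IH] G kG rV tiles.
  by rewrite -(del_set0 G); apply: tiles; rewrite ?fsub0set ?cardfs0.
apply: perfect_frac_tiling_avg => // [|x xV]; first by apply: leq_trans rV.
apply: IH; first exact: is_kgraph_del_vertex.
  by move: rV; rewrite (cardfsD1 x) xV.
move=> X XV hX; rewrite del_set_del_vertex; apply: tiles.
  by rewrite fsubUset fsub1set xV (fsubset_trans XV) ?fsubsetDl.
have xX : x \notin X by apply/negP => /(fsubsetP XV); rewrite in_fsetD1 eqxx.
by rewrite cardfsU1 xX hX.
Qed.

End FracTilings.

Lemma perfect_frac_tiling_spanning (R : realType) k l F G : spanning_subgraph F G ->
  @perfect_frac_tiling R k l F -> @perfect_frac_tiling R k l G.
Proof.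
move=> [[_ FG] VF] [T [uT [hT load]]]; exists T; split=> //; split; last by rewrite -VF.
by move=> p /hT[hom w]; split=> //; apply: cycle_hom_sub hom.
Qed.

Lemma hf_family_del_set (R : realType) k l d n0 M (delta eps : R) G X :
  (l < d)%N -> (d < k)%N -> 0 <= delta -> 0 < eps ->
  ((k - l) * (k - d))%:R <= eps / 2 * M%:R ->
  is_kgraph k G -> (n0 + (k - l) + d + M <= #|`verts G|)%N ->
  mindeg_ge G d ((delta + eps) * ('C(#|`verts G| - d, k - d))%:R) ->
  X `<=` verts G -> #|`X| = (#|`verts G| %% (k - l))%N ->
  hf_family k l d n0 delta (eps / 2) (del_set G X).
Proof.
move=> ld dk d0 e0 hM kG nG mG XV hX.
have hV : #|`verts (del_set G X)| = (#|`verts G| - #|`X|)%N by rewrite cardfsDS.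
set n := #|`verts G| in nG mG hX hV.
have rq : (#|`X| < k - l)%N by rewrite hX ltn_pmod // subn_gt0 (ltn_trans ld).
split; first exact: is_kgraph_del_set.
split; first by rewrite hV; clear -nG rq; lia.
split; first by rewrite hV hX {1}(divn_eq n (k - l)) addnK dvdn_mull.
apply: mindeg_geW (mindeg_ge_del_set kG XV mG) _.
rewrite hV [in X in _ <= X](splitr eps) addrA.
apply: del_set_degree_bound => //; first by rewrite divr_ge0 ?ltW.
- by clear -nG ld dk; lia.
- by rewrite leq_subr.
apply: le_trans (_ : eps / 2 * M%:R <= _); last first.
  by rewrite ler_pM2l ?divr_gt0 // ler_nat; clear -nG; lia.
by apply: le_trans _ hM; rewrite ler_nat leq_mul2r ltnW ?orbT.
Qed.

Lemma frct_admissible_hf (R : realType) k l d (delta : R) : (l < d)%N -> (d <= k)%N ->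
  frct_admissible k l d delta -> hf_admissible k l d delta.
Proof.
move=> ld dk [hd frct]; split=> // eps e0.
have d0 : 0 <= delta by case/andP: hd.
have [n0 tiles] := frct eps e0.
have kn : (k <= n0 + k.+2)%N by rewrite ltnW // ltnW // ltn_addl.
exists (n0 + k.+2)%N, id; split.
  move=> G fG; have cov := hf_family_dcover d0 e0 kn fG.
  case: fG => [kG [nG [_ mG]]].
  have nG' : (d <= #|`verts G|)%N by apply: leq_trans nG; apply: leq_trans dk kn.
  split; first by split; [split; apply: fsubset_refl | ].
  split; first exact/lcomponent_self/(lconnected_of_dcover ld dk kG cov).
  by apply: tiles => //; apply: leq_trans nG; apply: leq_addr.
move=> H x y _ _ _ fx fy; have covx := hf_family_dcover d0 e0 kn fx.
have covy := hf_family_dcover d0 e0 kn fy.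
case: fx => [kx [nx _]]; case: fy => [ky _].
apply: (lconnected_hunion ld dk) => //.
set Vx := verts (del_vertex H x).
have sub : Vx `\ y `<=` Vx `&` verts (del_vertex H y).
  apply/fsubsetP=> z; rewrite /Vx /= !inE.
  by case: (z == y); case: (z == x); case: (z \in verts H).
have [|U [UV hU]] := @fsubset_card_exists _ (Vx `\ y) d.
  move: (cardfsD1 y Vx) nx; set n := #|`Vx|; set m := #|`Vx `\ y|.
  clearbody n m; clear -dk; lia.
by exists U; split=> //; apply: fsubset_trans sub.
Qed.

Lemma hf_admissible_frct (R : realType) k l d (delta : R) : (l < d)%N -> (d < k)%N ->
  hf_admissible k l d delta -> frct_admissible k l d delta.
Proof.
move=> ld dk [hd hf]; split=> // eps e0.
have d0 : 0 <= delta by case/andP: hd.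
have e20 : 0 < eps / 2 by rewrite divr_gt0.
have [n0 [F [hF _]]] := hf (eps / 2) e20.
have [M hM] : exists M : nat, ((k - l) * (k - d))%:R <= eps / 2 * M%:R.
  exists (Num.truncn (((k - l) * (k - d))%:R / (eps / 2))).+1.
  by rewrite mulrC -ler_pdivrMr // ltW // truncnS_gt.
exists (n0 + (k - l) + d + M)%N => G kG nG mG.
have lk : (l < k)%N := ltn_trans ld dk.
apply: (perfect_frac_tiling_del_sets lk (r := (#|`verts G| %% (k - l))%N) kG).
  by apply: leq_trans (ltn_pmod _ _) _; rewrite ?subn_gt0 //; clear -nG; lia.
move=> X XV hX.
have [spanF [_ tileF]] := hF _ (hf_family_del_set ld dk d0 e0 hM kG nG mG XV hX).
exact: perfect_frac_tiling_spanning spanF tileF.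

Qed.

Theorem proposition2p10 (R : realType) (k l d : nat) :
  (1 <= l)%N -> (l < d)%N -> (d <= k - 1)%N -> ~~ ((k - l) %| k)%N ->
  hf_threshold R k l d = frct_threshold R k l d.
Proof.
move=> _ ld dk1 _.
have dk : (d < k)%N by clear -ld dk1; lia.
rewrite /hf_threshold /frct_threshold; congr inf; apply/funext => delta.
apply/propext; split; first exact: hf_admissible_frct.
exact: frct_admissible_hf ld (ltnW dk).
Qed.
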